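(* For $\theta\in(0,\pi/4]$, let $|\psi_\theta\rangle=\cos\theta|00\rangle+\sin\theta|11\rangle$ be a two-qubit pure state on $AB$ and $\psi_\theta=|\psi_\theta\rangle\langle\psi_\theta|$. Then its optimal unilocal 2-broadcasting fidelity on $A$ is \[ f_2(\psi_\theta)=\begin{cases}\cos^2\theta+\dfrac{\sin^2\theta}{\sqrt2}, & \theta\in(0,\arctan(2^{-1/4})],\\[2mm] \Big(\tfrac32(\cos^4\theta+\sin^4\theta)\Big)^{1/2}, & \theta\in(\arctan(2^{-1/4}),\pi/4].\end{cases} \]
   Context: Fidelity: $F(\rho,\sigma)=\mathrm{tr}\sqrt{\sqrt{\rho}\sigma\sqrt{\rho}}$. Let $A_1,A_2$ be copies of the qubit system $A$. The optimal unilocal $2$-broadcasting fidelity of a state $\rho_{AB}$ on $A$ is \[f_2(\rho_{AB})=\sup\Big\{\frac12\sum_{j=1}^2F\big(\rho_{AB},\mathrm{tr}_{\backslash A_jB}(\Lambda_{A\to A_1A_2}\otimes\mathrm{id}_B)(\rho_{AB})\big):\ \Lambda \text{ a quantum channel}\Big\},\] where $\mathrm{tr}_{\backslash A_jB}$ traces out all systems other than $A_j$ and $B$, and $A_j$ is identified with $A$. *)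

From mathcomp Require Import all_boot all_algebra.
From mathcomp Require Import all_classical all_reals all_analysis.
From mathcomp Require Import complex.

Set Implicit Arguments.
Unset Strict Implicit.
Unset Printing Implicit Defensive.

Import GRing.Theory Num.Theory.
Local Open Scope ring_scope.

Section QuantumDefs.
Variable R : realType.
Local Notation C := R[i].

Definition adjmx m n (A : 'M[C]_(m, n)) : 'M[C]_(n, m) := (map_mx (@conjc R) A)^T.

(* positive semidefinite: <v|A|v> >= 0 for all v (in the order of C = R[i],
   0 <= z means z is real and nonnegative) *)
Definition psd n (A : 'M[C]_n) : Prop :=
  forall v : 'cV[C]_n, 0 <= (adjmx v *m A *m v) 0 0.

Definition sqrtm n (A : 'M[C]_n) : 'M[C]_n :=
  xget 0 [set B : 'M[C]_n | psd B /\ B *m B = A].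

(* Uhlmann fidelity F(rho,sigma) = tr sqrt(sqrt rho sigma sqrt rho)
   (a nonnegative real number for PSD arguments; we take its real part) *)
Definition fidelity n (rho sigma : 'M[C]_n) : R :=
  complex.Re (\tr (sqrtm (sqrtm rho *m sigma *m sqrtm rho))).

(* decomposition of a composite index of 'I_(m*n) = 'I_m (x) 'I_n,
   inverse of mxvec_index *)
Definition idx_pair m n (k : 'I_(m * n)) : 'I_m * 'I_n :=
  enum_val (cast_ord (esym (@mxvec_cast m n)) k).

(* block (b,d) of an operator X on a composite system S (x) K *)
Definition blk m k (X : 'M[C]_(m * k)) (b d : 'I_k) : 'M[C]_m :=
  \matrix_(a, c) X (mxvec_index a b) (mxvec_index c d).

(* (f (x) id_K) X, for f a map on operators of the first factor *)
Definition ext m n k (f : 'M[C]_m -> 'M[C]_n) (X : 'M[C]_(m * k)) : 'M[C]_(n * k) :=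
  \matrix_(i, j) f (blk X (idx_pair i).2 (idx_pair j).2) (idx_pair i).1 (idx_pair j).1.

Definition channel m n (f : 'M[C]_m -> 'M[C]_n) : Prop :=
  [/\ (forall (a : C) (X Y : 'M[C]_m), f (a *: X + Y) = a *: f X + f Y),
      (forall (k : nat) (X : 'M[C]_(m * k)), psd X -> psd (ext f X))
    & (forall X : 'M[C]_m, \tr (f X) = \tr X)].

(* On a system (A1 (x) A2) (x) B: keep A1 B (trace out A2) *)
Definition keep1 m1 m2 k (Y : 'M[C]_((m1 * m2) * k)) : 'M[C]_(m1 * k) :=
  \matrix_(i, j) \sum_(a2 < m2)
     Y (mxvec_index (mxvec_index (idx_pair i).1 a2) (idx_pair i).2)
       (mxvec_index (mxvec_index (idx_pair j).1 a2) (idx_pair j).2).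

(* On a system (A1 (x) A2) (x) B: keep A2 B (trace out A1) *)
Definition keep2 m1 m2 k (Y : 'M[C]_((m1 * m2) * k)) : 'M[C]_(m2 * k) :=
  \matrix_(i, j) \sum_(a1 < m1)
     Y (mxvec_index (mxvec_index a1 (idx_pair i).1) (idx_pair i).2)
       (mxvec_index (mxvec_index a1 (idx_pair j).1) (idx_pair j).2).

Definition f2 dA dB (rho : 'M[C]_(dA * dB)) : R :=
  sup [set x : R | exists L : 'M[C]_dA -> 'M[C]_(dA * dA),
         channel L /\
         x = (fidelity rho (keep1 (ext L rho)) + fidelity rho (keep2 (ext L rho))) / 2].

(* |psi_theta> = cos th |00> + sin th |11>, basis |ab> = mxvec_index a b *)
Definition psi_ket (th : R) : 'cV[C]_(2 * 2) :=
  \col_i (if i == mxvec_index (ord0 : 'I_2) (ord0 : 'I_2) then ((cos th)%:C)%C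
          else if i == mxvec_index (ord_max : 'I_2) (ord_max : 'I_2) then ((sin th)%:C)%C
          else 0).

Definition psi_state (th : R) : 'M[C]_(2 * 2) := psi_ket th *m adjmx (psi_ket th).

End QuantumDefs.

(* Write c = cos θ, s = sin θ and Ω = (Λ ⊗ id)(ψ) for the three-qubit output
   of a broadcasting channel Λ.  Since ψ is pure, F(ψ, σ) = √⟨ψ|σ|ψ⟩, and the
   two overlaps ⟨ψ|tr_A2 Ω|ψ⟩, ⟨ψ|tr_A1 Ω|ψ⟩ are quadratic forms in Ω.  Complete
   positivity makes Ω positive semidefinite, and trace preservation fixes the
   traces c², s² of its two diagonal blocks over B.  An explicit sum-of-squares
   certificate then bounds the sum of the overlaps by 2f², where f is the
   claimed value, so the average of their square roots is at most f.  The bound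
   is attained by an explicit channel: the single Kraus operator
   |0⟩ ↦ |00⟩, |1⟩ ↦ (|01⟩ + |10⟩)/√2 below the threshold tan θ = 2^(-1/4), and
   a suitably weighted pair of Kraus operators above it. *)

From mathcomp Require Import all_boot all_order all_algebra.
From mathcomp Require Import all_classical all_reals all_analysis.
From mathcomp Require Import complex.
From mathcomp Require Import ring lra.

Set Implicit Arguments.
Unset Strict Implicit.
Unset Printing Implicit Defensive.

Import Order.TTheory GRing.Theory Num.Theory.
Local Open Scope complex_scope.
Local Open Scope ring_scope.

Section RealFacts.
Variable R : realType.

Lemma sup_eq_max (E : set R) x : E x -> (forall y, E y -> y <= x) -> sup E = x.
Proof.
move=> Ex x_ub; apply/le_anti/andP; split.
  by apply: ge_sup; [exists x | move=> y /x_ub].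
exact: (ub_le_sup (ex_intro _ x x_ub)).
Qed.

Lemma avg_sqrt_le (a b f : R) : 0 <= a -> 0 <= b -> 0 <= f -> a + b <= 2 * f ^+ 2 ->
  (Num.sqrt a + Num.sqrt b) / 2 <= f.
Proof.
move=> a_ge0 b_ge0 f_ge0; rewrite -{1}(sqr_sqrtr a_ge0) -{1}(sqr_sqrtr b_ge0).
have := sqrtr_ge0 a; have := sqrtr_ge0 b.
set x := Num.sqrt a; set y := Num.sqrt b => y_ge0 x_ge0 sum_sq.
have : (x + y) ^+ 2 <= (2 * f) ^+ 2 by have := sqr_ge0 (x - y); nra.
rewrite ler_pXn2r ?nnegrE ?addr_ge0 ?mulr_ge0 //; lra.
Qed.

Lemma sqr_sqrt2 : Num.sqrt 2 ^+ 2 = 2 :> R.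
Proof. by apply: sqr_sqrtr; apply: ler0n. Qed.

Lemma sqrt2_neq0 : Num.sqrt 2 != 0 :> R.
Proof. by rewrite sqrtr_eq0 -ltNge ltr0n. Qed.

Lemma sqrt2_sqr_identity (x y : R) :
  2 * (x + y / Num.sqrt 2) ^+ 2 = (2 * x + Num.sqrt 2 * y) * x + (y + Num.sqrt 2 * x) * y.
Proof.
have sqrt2_inv : (Num.sqrt 2)^-1 = Num.sqrt 2 / 2 :> R.
  by apply: (mulfI sqrt2_neq0); rewrite mulfV ?sqrt2_neq0 // mulrA -expr2 sqr_sqrt2 mulfV.
rewrite sqrt2_inv (_ : _ * _ = (2 * x + Num.sqrt 2 * y) * x + (y + Num.sqrt 2 * x) * y
  + (Num.sqrt 2 ^+ 2 - 2) * (y ^+ 2 / 2)); last by field.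
by rewrite sqr_sqrt2 subrr mul0r addr0.
Qed.

Lemma sqrt2_cross_ge0 (x y : R) : 0 <= x -> 0 <= y -> 2 * y ^+ 2 <= x ^+ 2 ->
  0 <= (x + Num.sqrt 2 * y) * (Num.sqrt 2 * x - y) - 2 * x * y.
Proof.
move=> x_ge0 y_ge0 yx; have r_ge0 : 0 <= Num.sqrt 2 :> R := sqrtr_ge0 _.
have ry_ge0 : 0 <= Num.sqrt 2 * y := mulr_ge0 r_ge0 y_ge0.
have d_ge0 : 0 <= x - Num.sqrt 2 * y.
  by rewrite subr_ge0 -(ler_pXn2r (_ : 0 < 2)%N) ?nnegrE // exprMn sqr_sqrt2.
rewrite (_ : _ - _ = 3 * y * (x - Num.sqrt 2 * y) + Num.sqrt 2 * (x - Num.sqrt 2 * y) ^+ 2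
  + (Num.sqrt 2 ^+ 2 - 2) * (3 * y * x - Num.sqrt 2 * y ^+ 2)); last by ring.
rewrite sqr_sqrt2 subrr mul0r addr0.
apply: addr_ge0; first exact: mulr_ge0 (mulr_ge0 (ler0n R 3) y_ge0) d_ge0.
exact: mulr_ge0 r_ge0 (sqr_ge0 _).
Qed.

Lemma le_atan (th q : R) : - (pi / 2) < th < pi / 2 -> (th <= atan q) = (tan th <= q).
Proof.
move=> thI; have thI' : th \in `](- (pi / 2)), (pi / 2)[ by rewrite in_itv.
have qI : atan q \in `](- (pi / 2)), (pi / 2)[ by rewrite in_itv /= atan_gtNpi2 atan_ltpi2.
by rewrite !leNgt -(ltr_tan qI thI') atanK.
Qed.

Lemma powR_Nroot_exp (a : R) n : 0 <= a -> (0 < n)%N -> powR a (- n%:R^-1) ^+ n = a^-1.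
Proof.
move=> a_ge0 n_gt0.
rewrite -powR_mulrn ?powR_ge0 // -powRrM mulNr mulVf ?pnatr_eq0 -?lt0n //.
exact: powR_inv1.
Qed.

Lemma le_atan_quartic_root (th : R) : - (pi / 2) < th < pi / 2 -> 0 <= sin th ->
  (th <= atan (powR 2 (- 4^-1))) = (2 * sin th ^+ 4 <= cos th ^+ 4).
Proof.
move=> thI s_ge0; have c_gt0 : 0 < cos th by apply: cos_gt0_pihalf.
have q_ge0 : 0 <= powR 2 (- 4^-1) :> R := powR_ge0 _ _.
have tan_ge0 : 0 <= tan th by apply: divr_ge0; last exact: ltW.
rewrite le_atan // -(ler_pXn2r (_ : 0 < 4)%N) ?nnegrE //.
rewrite powR_Nroot_exp // /tan expr_div_n ler_pdivrMr ?exprn_gt0 //.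
by apply/idP/idP => ?; lra.
Qed.

End RealFacts.

Section Adjoint.
Variable R : realType.
Local Notation C := R[i].

Lemma adjmxE m n (A : 'M[C]_(m, n)) i j : adjmx A i j = conjc (A j i).
Proof. by rewrite /adjmx !mxE. Qed.

Lemma adjmxK m n (A : 'M[C]_(m, n)) : adjmx (adjmx A) = A.
Proof. by apply/matrixP=> i j; rewrite !adjmxE conjcK. Qed.

Lemma adjmxM m n p (A : 'M[C]_(m, n)) (B : 'M[C]_(n, p)) :
  adjmx (A *m B) = adjmx B *m adjmx A.
Proof. by rewrite /adjmx map_mxM trmx_mul. Qed.

Lemma adjmxD m n (A B : 'M[C]_(m, n)) : adjmx (A + B) = adjmx A + adjmx B.
Proof. by rewrite /adjmx map_mxD linearD. Qed.

Lemma adjmxN m n (A : 'M[C]_(m, n)) : adjmx (- A) = - adjmx A.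
Proof. by rewrite /adjmx map_mxN linearN. Qed.

Lemma adjmxZ m n a (A : 'M[C]_(m, n)) : adjmx (a *: A) = conjc a *: adjmx A.
Proof. by rewrite /adjmx map_mxZ linearZ. Qed.

Lemma adjmx1 n : adjmx (1%:M : 'M[C]_n) = 1%:M.
Proof.
apply/matrixP=> i j; rewrite adjmxE !mxE eq_sym.
by case: (_ == _); rewrite ?conjc1 ?conjc0.
Qed.

Lemma adjmx_delta m n i j : adjmx (delta_mx i j : 'M[C]_(m, n)) = delta_mx j i.
Proof. by rewrite /adjmx map_delta_mx trmx_delta. Qed.

Definition mxform n (u : 'cV[C]_n) (B : 'M[C]_n) (v : 'cV[C]_n) : C :=
  (adjmx u *m B *m v) 0 0.

Lemma mxformDl n u1 u2 B (v : 'cV[C]_n) :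
  mxform (u1 + u2) B v = mxform u1 B v + mxform u2 B v.
Proof. by rewrite /mxform adjmxD !mulmxDl mxE. Qed.

Lemma mxformDr n u B (v1 v2 : 'cV[C]_n) :
  mxform u B (v1 + v2) = mxform u B v1 + mxform u B v2.
Proof. by rewrite /mxform mulmxDr mxE. Qed.

Lemma mxformZl n a u B (v : 'cV[C]_n) : mxform (a *: u) B v = conjc a * mxform u B v.
Proof. by rewrite /mxform adjmxZ -!scalemxAl mxE. Qed.

Lemma mxformZr n a u B (v : 'cV[C]_n) : mxform u B (a *: v) = a * mxform u B v.
Proof. by rewrite /mxform -scalemxAr mxE. Qed.

Lemma mxform0l n B (v : 'cV[C]_n) : mxform 0 B v = 0.
Proof. by rewrite /mxform /adjmx map_mx0 trmx0 !mul0mx mxE. Qed.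

Lemma mxform0r n B (u : 'cV[C]_n) : mxform u B 0 = 0.
Proof. by rewrite /mxform mulmx0 mxE. Qed.

Lemma mxform_delta n (B : 'M[C]_n) p q : mxform (delta_mx p 0) B (delta_mx q 0) = B p q.
Proof. by rewrite /mxform adjmx_delta -rowE -colE !mxE. Qed.

Lemma mxform_sum n (u : 'cV[C]_n) I (r : seq I) (F : I -> 'M[C]_n) v :
  mxform u (\sum_(k <- r) F k) v = \sum_(k <- r) mxform u (F k) v.
Proof.
elim: r => [|x r IH]; first by rewrite !big_nil /mxform mulmx0 mul0mx mxE.
by rewrite !big_cons /mxform mulmxDr mulmxDl mxE -IH.
Qed.

Definition basis_comb n (l : seq (R * 'I_n)) : 'cV[C]_n :=
  \sum_(x <- l) x.1%:C *: delta_mx x.2 0.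

Lemma mxform_basis_comb n (l : seq (R * 'I_n)) B :
  mxform (basis_comb l) B (basis_comb l) =
  \sum_(x <- l) \sum_(y <- l) (x.1 * y.1)%:C * B x.2 y.2.
Proof.
have sumDl (l1 : seq (R * 'I_n)) v : mxform (basis_comb l1) B v =
    \sum_(x <- l1) conjc x.1%:C * mxform (delta_mx x.2 0) B v.
  elim: l1 => [|x l1 IH]; first by rewrite /basis_comb !big_nil mxform0l.
  by rewrite /basis_comb !big_cons mxformDl mxformZl -IH.
have sumDr (l1 : seq (R * 'I_n)) u : mxform u B (basis_comb l1) =
    \sum_(x <- l1) x.1%:C * mxform u B (delta_mx x.2 0).
  elim: l1 => [|x l1 IH]; first by rewrite /basis_comb !big_nil mxform0r.
  by rewrite /basis_comb !big_cons mxformDr mxformZr -IH.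
rewrite sumDl; apply: eq_bigr => x _; rewrite sumDr mulr_sumr; apply: eq_bigr => y _.
by rewrite mxform_delta conjc_real mulrA rmorphM.
Qed.

End Adjoint.

Section PositiveSemidefinite.
Variable R : realType.
Local Notation C := R[i].

Lemma adjmx_mul_self_ge0 m (z : 'cV[C]_m) : 0 <= (adjmx z *m z) 0 0.
Proof.
rewrite mxE; apply: sumr_ge0 => i _; rewrite adjmxE mulrC; exact: mulcJ_ge0.
Qed.

Lemma adjmx_mul_self_eq0 m n (W : 'M[C]_(m, n)) : adjmx W *m W = 0 -> W = 0.
Proof.
move=> W0; apply/matrixP => i j.
have : (adjmx W *m W) j j = 0 by rewrite W0 mxE.
rewrite mxE => /psumr_eq0P Wj0.
have := Wj0 (fun k _ => ltac:(rewrite adjmxE mulrC; exact: mulcJ_ge0)) i isT.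
by rewrite adjmxE mxE => /eqP; rewrite mulf_eq0 conjc_eq0 orbb => /eqP.
Qed.

Lemma psd_outer m (k : 'cV[C]_m) : psd (k *m adjmx k).
Proof.
move=> v; have -> : adjmx v *m (k *m adjmx k) *m v =
    adjmx (adjmx k *m v) *m (adjmx k *m v) by rewrite adjmxM adjmxK !mulmxA.
exact: adjmx_mul_self_ge0.
Qed.

Lemma psd_conj m n (M : 'M[C]_(n, m)) (X : 'M[C]_m) : psd X -> psd (M *m X *m adjmx M).
Proof.
move=> psdX v; have -> : adjmx v *m (M *m X *m adjmx M) *m v =
    adjmx (adjmx M *m v) *m X *m (adjmx M *m v) by rewrite adjmxM adjmxK !mulmxA.
exact: psdX.
Qed.

Lemma psd_sum n I (r : seq I) (F : I -> 'M[C]_n) :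
  (forall k, psd (F k)) -> psd (\sum_(k <- r) F k).
Proof.
move=> psdF v; rewrite -[_ 0 0]/(mxform v _ v) mxform_sum.
by apply: sumr_ge0 => k _; apply: psdF.
Qed.

(* Test the form on e_p, e_q, e_p + e_q and e_p + i e_q, where it must be real. *)
Lemma psd_entry_conj n (B : 'M[C]_n) p q : psd B -> B q p = conjc (B p q).
Proof.
move=> psdB; pose e (i : 'I_n) : 'cV[C]_n := delta_mx i 0.
have formE (a : C) : mxform (e p + a *: e q) B (e p + a *: e q) =
    B p p + a * B p q + conjc a * B q p + conjc a * a * B q q.
  by rewrite !mxformDl !mxformDr !mxformZl !mxformZr !mxform_delta; ring.
have := ger0_Im (psdB (e p + 1 *: e q)); have := ger0_Im (psdB (e p + 'i *: e q)).
have := ger0_Im (psdB (e p)); have := ger0_Im (psdB (e q)).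
rewrite -![(adjmx _ *m B *m _) 0 0]/(mxform _ B _) !formE !mxform_delta.
case: (B p p) => a1 b1; case: (B p q) => a2 b2.
case: (B q p) => a3 b3; case: (B q q) => a4 b4.
rewrite /conjc /=; simpc => h1 h2 h3 h4.
by apply/eqP; rewrite eq_complex /=; apply/andP; split; apply/eqP; lra.
Qed.

Lemma psd_adjmx n (B : 'M[C]_n) : psd B -> adjmx B = B.
Proof. by move=> psdB; apply/matrixP => i j; rewrite adjmxE -psd_entry_conj. Qed.

Lemma ge0_complexE (z : C) : 0 <= z -> z = (complex.Re z)%:C /\ 0 <= complex.Re z.
Proof.
case: z => a b z_ge0; have /= b0 := ger0_Im z_ge0; subst b.
by split => //; move: z_ge0; rewrite -[(a +i* 0)]/(a%:C) ler0c.
Qed.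

End PositiveSemidefinite.

Section PureStateFidelity.
Variables (R : realType) (n : nat) (k : 'cV[R[i]]_n).
Hypothesis k_unit : adjmx k *m k = 1%:M.
Let P := k *m adjmx k.

Lemma proj_idem : P *m P = P.
Proof. by rewrite /P mulmxA -(mulmxA k) k_unit mulmx1. Qed.

Lemma adjmx_proj : adjmx P = P.
Proof. by rewrite /P adjmxM adjmxK. Qed.

Lemma mxtrace_proj : \tr P = 1.
Proof. by rewrite /P mxtrace_mulC k_unit mxtrace1. Qed.

Lemma proj_sandwich (X : 'M[R[i]]_n) : P *m X *m P = mxform k X k *: P.
Proof.
rewrite /P (_ : k *m adjmx k *m X *m (k *m adjmx k) =
  k *m (adjmx k *m X *m k) *m adjmx k); last by rewrite !mulmxA.
by rewrite {1}(mx11_scalar (adjmx k *m X *m k)) mul_mx_scalar -scalemxAl.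
Qed.

(* A PSD square root of x P is hermitian, hence supported on the range of P,
   hence a multiple of P, and the multiple is √x by taking traces. *)
Lemma psd_sqrt_scale_proj (x : R) (B : 'M[R[i]]_n) : 0 <= x -> psd B ->
  B *m B = x%:C *: P -> B = (Num.sqrt x)%:C *: P.
Proof.
move=> x_ge0 psdB BB.
have adjB := psd_adjmx psdB.
have B_proj : B *m (1%:M - P) = 0.
  apply: adjmx_mul_self_eq0.
  rewrite adjmxM adjmxD adjmx1 adjmxN adjmx_proj adjB mulmxA -(mulmxA _ B B) BB.
  by rewrite -scalemxAr mulmxBl mul1mx proj_idem subrr scaler0 mul0mx.
have BP : B = B *m P.
  by move/eqP: B_proj; rewrite mulmxBr mulmx1 subr_eq0 => /eqP.
have PB : B = P *m B by rewrite -{1}adjB {1}BP adjmxM adjmx_proj adjB.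
have BE : B = mxform k B k *: P by rewrite -proj_sandwich -PB -BP.
have l_ge0 : 0 <= mxform k B k by apply: psdB.
move: BB; rewrite BE; move: l_ge0; set l := mxform k B k => l_ge0.
rewrite -scalemxAl -scalemxAr proj_idem scalerA => /(congr1 mxtrace).
rewrite !mxtraceZ mxtrace_proj !mulr1.
have [-> Re_ge0] := ge0_complexE l_ge0; rewrite -rmorphM => /complexI <-.
by rewrite -expr2 sqrtr_sqr ger0_norm.
Qed.

Lemma sqrtm_scale_proj (x : R) : 0 <= x -> sqrtm (x%:C *: P) = (Num.sqrt x)%:C *: P.
Proof.
move=> x_ge0; rewrite /sqrtm; apply: xget_unique; last first.
  by move=> B [psdB BB]; apply: psd_sqrt_scale_proj.
split.
  move=> v; rewrite -scalemxAr -scalemxAl mxE; apply: mulr_ge0.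
    by rewrite ler0c sqrtr_ge0.
  exact: psd_outer.
by rewrite -scalemxAl -scalemxAr proj_idem scalerA -rmorphM -expr2 sqr_sqrtr.
Qed.

Lemma sqrtm_proj : sqrtm P = P.
Proof. by have := sqrtm_scale_proj ler01; rewrite sqrtr1 scale1r. Qed.

Lemma fidelity_pure (sigma : 'M[R[i]]_n) : 0 <= mxform k sigma k ->
  fidelity P sigma = Num.sqrt (complex.Re (mxform k sigma k)).
Proof.
move=> form_ge0; rewrite /fidelity sqrtm_proj proj_sandwich.
have [formE Re_ge0] := ge0_complexE form_ge0.
by rewrite {1}formE sqrtm_scale_proj // mxtraceZ mxtrace_proj mulr1.
Qed.

End PureStateFidelity.

Lemma idx_pair_mxvec_index m n (a : 'I_m) (b : 'I_n) :
  idx_pair (mxvec_index a b) = (a, b).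
Proof. by rewrite /idx_pair /mxvec_index cast_ordK enum_rankK. Qed.

Lemma mxvec_index_eq m n (a a' : 'I_m) (b b' : 'I_n) :
  (mxvec_index a b == mxvec_index a' b') = (a == a') && (b == b').
Proof.
apply/eqP/andP => [abE|[/eqP -> /eqP ->]] //.
by have := congr1 (@idx_pair m n) abE; rewrite !idx_pair_mxvec_index => -[-> ->].
Qed.

Lemma sum_mxvec_index (V : nmodType) m n (F : 'I_(m * n) -> V) :
  \sum_(k < m * n) F k = \sum_(a < m) \sum_(b < n) F (mxvec_index a b).
Proof.
rewrite pair_bigA /= (reindex (uncurry (@mxvec_index m n))) /=.
  by apply: eq_bigr => -[a b].
by case: (curry_mxvec_bij m n) => g h1 h2; exists g => x _; [apply: h1|apply: h2].
Qed.

Section KrausChannels.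
Variable R : realType.
Local Notation C := R[i].

Definition tens_id m n k (A : 'M[C]_(n, m)) : 'M[C]_(n * k, m * k) :=
  \matrix_(I, J) (A (idx_pair I).1 (idx_pair J).1 * ((idx_pair I).2 == (idx_pair J).2)%:R).

Lemma ext_conj m n k (A : 'M[C]_(n, m)) (Y : 'M[C]_(m * k)) :
  ext (fun X => A *m X *m adjmx A) Y = tens_id k A *m Y *m adjmx (tens_id k A).
Proof.
apply/matrixP => I J.
case/mxvec_indexP: I => i b; case/mxvec_indexP: J => c d.
rewrite /ext !mxE !idx_pair_mxvec_index /= sum_mxvec_index.
under eq_bigr => a' _ do rewrite mxE.
under [RHS]eq_bigr => a' _ do (under eq_bigr => b' _ do rewrite !mxE sum_mxvec_index).
apply: eq_bigr => a' _.
rewrite [RHS](bigD1 d) //= [X in _ + X]big1 ?addr0; last first.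
  move=> b' b'd; rewrite !idx_pair_mxvec_index /= eq_sym (negbTE b'd).
  by rewrite mulr0 conjc0 mulr0.
rewrite !idx_pair_mxvec_index /= eqxx mulr1 adjmxE; congr (_ * _).
apply: eq_bigr => a _.
rewrite [RHS](bigD1 b) //= [X in _ + X]big1 ?addr0; last first.
  move=> b' b'b; rewrite /tens_id mxE !idx_pair_mxvec_index /= eq_sym (negbTE b'b).
  by rewrite mulr0 mul0r.
by rewrite /tens_id /blk !mxE !idx_pair_mxvec_index /= eqxx mulr1.
Qed.

Lemma ext_sum m n k r (f : 'I_r -> 'M[C]_m -> 'M[C]_n) (Y : 'M[C]_(m * k)) :
  ext (fun X => \sum_(j < r) f j X) Y = \sum_(j < r) ext (f j) Y.
Proof.
apply/matrixP => I J; rewrite summxE mxE summxE.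
by apply: eq_bigr => j _; rewrite mxE.
Qed.

Definition kraus m n r (K : 'I_r -> 'M[C]_(n, m)) (X : 'M[C]_m) : 'M[C]_n :=
  \sum_(j < r) K j *m X *m adjmx (K j).

Lemma kraus_channel m n r (K : 'I_r -> 'M[C]_(n, m)) :
  \sum_(j < r) adjmx (K j) *m K j = 1%:M -> channel (kraus K).
Proof.
move=> K_tp; split.
- move=> a X Y; rewrite /kraus scaler_sumr -big_split /=; apply: eq_bigr => j _.
  by rewrite mulmxDr mulmxDl -scalemxAr -scalemxAl.
- move=> k X psdX; rewrite /kraus ext_sum.
  under eq_bigr => j _ do rewrite ext_conj.
  by apply: psd_sum => j; apply: psd_conj.
- move=> X; rewrite /kraus linear_sum /=.
  under eq_bigr => j _ do rewrite mxtrace_mulC mulmxA.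
  by rewrite -linear_sum /= -mulmx_suml K_tp mul1mx.
Qed.

Lemma channel_blk_trace m n k (L : 'M[C]_m -> 'M[C]_n) (X : 'M[C]_(m * k)) b :
  channel L -> \sum_(a < n) ext L X (mxvec_index a b) (mxvec_index a b) = \tr (blk X b b).
Proof.
case=> _ _ L_tp; rewrite -L_tp /mxtrace; apply: eq_bigr => a _.
by rewrite /ext mxE idx_pair_mxvec_index.
Qed.

End KrausChannels.

Local Notation o0 := (ord0 : 'I_2).
Local Notation o1 := (ord_max : 'I_2).
(* [ix a1 a2 b] is the index of the basis vector |a1 a2> (x) |b> of (A1 A2) B. *)
Local Notation ix a1 a2 b := (mxvec_index (mxvec_index a1 a2) b).

Lemma ord2_cases (a : 'I_2) : a = o0 \/ a = o1.
Proof. by case: a => [[|[|]]] // ?; [left|right]; apply: val_inj. Qed.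

Lemma sum_ord2 (V : nmodType) (F : 'I_2 -> V) : \sum_(i < 2) F i = F o0 + F o1.
Proof. by rewrite big_ord_recr big_ord1 /=; congr (F _ + F _); apply: val_inj. Qed.

Section TwoQubitState.
Variables (R : realType) (th : R).
Local Notation C := R[i].
Local Notation c := (cos th).
Local Notation s := (sin th).

Definition amp (b : 'I_2) : R := if b == o0 then c else s.

Lemma psi_ketE a b : psi_ket th (mxvec_index a b) 0 = ((a == b)%:R * amp b)%:C.
Proof.
rewrite mxE !mxvec_index_eq /amp.
by case: (ord2_cases a) => ->; case: (ord2_cases b) => -> /=; rewrite ?mul1r ?mul0r.
Qed.

Lemma psi_ket_comb :
  psi_ket th = basis_comb [:: (c, mxvec_index o0 o0); (s, mxvec_index o1 o1)].
Proof.
apply/matrixP => i j; rewrite !ord1; case/mxvec_indexP: i => a b.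
rewrite /basis_comb !big_cons big_nil !mxE !mxvec_index_eq /=.
case: (ord2_cases a) => ->; case: (ord2_cases b) => -> /=;
  by rewrite ?mulr1 ?mulr0 ?addr0 ?add0r.
Qed.

Lemma psi_ket_unit : adjmx (psi_ket th) *m psi_ket th = 1%:M.
Proof.
apply/matrixP => i j; rewrite !ord1.
have -> : (adjmx (psi_ket th) *m psi_ket th) 0 0 = mxform (psi_ket th) 1%:M (psi_ket th).
  by rewrite /mxform mulmx1.
rewrite psi_ket_comb mxform_basis_comb !big_cons !big_nil /= !mxE !mxvec_index_eq /=.
by rewrite !mulr1 !mulr0 !addr0 !add0r -rmorphD -!expr2 cos2Dsin2.
Qed.

Lemma mxform_psi_keep1 (Om : 'M[C]_(2 * 2 * 2)) :
  mxform (psi_ket th) (keep1 Om) (psi_ket th) =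
  \sum_(a2 < 2) mxform (basis_comb [:: (c, ix o0 a2 o0); (s, ix o1 a2 o1)]) Om
                       (basis_comb [:: (c, ix o0 a2 o0); (s, ix o1 a2 o1)]).
Proof.
rewrite sum_ord2 psi_ket_comb !mxform_basis_comb !big_cons !big_nil /=.
by rewrite /keep1 !mxE !idx_pair_mxvec_index /= !sum_ord2; ring.
Qed.

Lemma mxform_psi_keep2 (Om : 'M[C]_(2 * 2 * 2)) :
  mxform (psi_ket th) (keep2 Om) (psi_ket th) =
  \sum_(a1 < 2) mxform (basis_comb [:: (c, ix a1 o0 o0); (s, ix a1 o1 o1)]) Om
                       (basis_comb [:: (c, ix a1 o0 o0); (s, ix a1 o1 o1)]).
Proof.
rewrite sum_ord2 psi_ket_comb !mxform_basis_comb !big_cons !big_nil /=.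
by rewrite /keep2 !mxE !idx_pair_mxvec_index /= !sum_ord2; ring.
Qed.

Lemma mxtrace_psi_blk b : \tr (blk (psi_state th) b b) = (amp b ^+ 2)%:C.
Proof.
rewrite /mxtrace sum_ord2 /blk !mxE !big_ord1 !adjmxE !psi_ketE !conjc_real.
rewrite -!rmorphM -rmorphD; congr _%:C.
by case: (ord2_cases b) => -> /=; ring.
Qed.

Lemma psd_ext_psi (L : 'M[C]_2 -> 'M[C]_(2 * 2)) :
  channel L -> psd (ext L (psi_state th)).
Proof. by case=> _ L_cp _; apply: L_cp; apply: psd_outer. Qed.

Definition overlap1 (L : 'M[C]_2 -> 'M[C]_(2 * 2)) : C :=
  mxform (psi_ket th) (keep1 (ext L (psi_state th))) (psi_ket th).

Definition overlap2 (L : 'M[C]_2 -> 'M[C]_(2 * 2)) : C :=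
  mxform (psi_ket th) (keep2 (ext L (psi_state th))) (psi_ket th).

End TwoQubitState.

Section BroadcastBound.
Variables (R : realType) (th : R) (L : 'M[R[i]]_2 -> 'M[R[i]]_(2 * 2)).
Hypothesis chL : channel L.
Local Notation c := (cos th).
Local Notation s := (sin th).
Local Notation Om := (ext L (psi_state th)).
Local Notation Q l := (mxform (basis_comb l) Om (basis_comb l)).
Local Notation T b := (Om (ix o0 o0 b) (ix o0 o0 b) + Om (ix o0 o1 b) (ix o0 o1 b)
  + Om (ix o1 o0 b) (ix o1 o0 b) + Om (ix o1 o1 b) (ix o1 o1 b)).

Lemma Q_ge0 l : 0 <= Q l.
Proof. exact: psd_ext_psi chL _. Qed.

Lemma blk_trace0 : T o0 = c%:C ^+ 2.
Proof.
have := channel_blk_trace (psi_state th) o0 chL.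
by rewrite sum_mxvec_index !sum_ord2 mxtrace_psi_blk /amp eqxx rmorphXn !addrA.
Qed.

Lemma blk_trace1 : T o1 = s%:C ^+ 2.
Proof.
have := channel_blk_trace (psi_state th) o1 chL.
by rewrite sum_mxvec_index !sum_ord2 mxtrace_psi_blk /amp /= rmorphXn !addrA.
Qed.

Lemma overlap1_ge0 : 0 <= overlap1 th L.
Proof. by rewrite /overlap1 mxform_psi_keep1 sum_ord2 addr_ge0 ?Q_ge0. Qed.

Lemma overlap2_ge0 : 0 <= overlap2 th L.
Proof. by rewrite /overlap2 mxform_psi_keep2 sum_ord2 addr_ge0 ?Q_ge0. Qed.

Lemma overlapsE : overlap1 th L + overlap2 th L =
  Q [:: (c, ix o0 o0 o0); (s, ix o1 o0 o1)] + Q [:: (c, ix o0 o1 o0); (s, ix o1 o1 o1)]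
  + (Q [:: (c, ix o0 o0 o0); (s, ix o0 o1 o1)] + Q [:: (c, ix o1 o0 o0); (s, ix o1 o1 o1)]).
Proof. by rewrite /overlap1 /overlap2 mxform_psi_keep1 mxform_psi_keep2 !sum_ord2. Qed.

Lemma overlaps_le_sym : overlap1 th L + overlap2 th L <= (3 * (c ^+ 4 + s ^+ 4))%:C.
Proof.
pose sos := (s ^+ 2)%:C * Q [:: (1, ix o0 o1 o1); (-1, ix o1 o0 o1)]
  + Q [:: (c, ix o0 o0 o0); (- s, ix o0 o1 o1); (- s, ix o1 o0 o1)]
  + (c ^+ 2)%:C * Q [:: (1, ix o1 o0 o0); (-1, ix o0 o1 o0)]
  + Q [:: (c, ix o1 o0 o0); (c, ix o0 o1 o0); (- s, ix o1 o1 o1)]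
  + (3 * s ^+ 2)%:C * Q [:: (1, ix o0 o0 o1)]
  + (3 * c ^+ 2)%:C * Q [:: (1, ix o1 o1 o0)].
have sos_ge0 : 0 <= sos.
  by rewrite /sos; repeat (apply: addr_ge0 || apply: Q_ge0 || rewrite ler0c
    || apply: sqr_ge0 || apply: mulr_ge0 || done).
have cert : 3 * (c%:C ^+ 2 * T o0 + s%:C ^+ 2 * T o1)
    - (overlap1 th L + overlap2 th L) = sos.
  by rewrite overlapsE /sos !mxform_basis_comb !big_cons !big_nil /=; ring.
rewrite blk_trace0 blk_trace1 in cert.
rewrite -subr_ge0 (_ : (3 * _)%:C = 3 * (c%:C ^+ 2 * c%:C ^+ 2 + s%:C ^+ 2 * s%:C ^+ 2)).
  by rewrite cert.
by ring.
Qed.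

Lemma overlaps_le_asym : c != 0 ->
  0 <= (c ^+ 2 + Num.sqrt 2 * s ^+ 2) * (Num.sqrt 2 * c ^+ 2 - s ^+ 2) - 2 * c ^+ 2 * s ^+ 2 ->
  overlap1 th L + overlap2 th L <= (2 * (c ^+ 2 + s ^+ 2 / Num.sqrt 2) ^+ 2)%:C.
Proof.
set r := Num.sqrt 2; set al := c ^+ 2 + r * s ^+ 2; set ga := r * c ^+ 2 - s ^+ 2.
move=> c_neq0 cond.
have r_ge0 : 0 <= r by apply: sqrtr_ge0.
have c2_gt0 : 0 < c ^+ 2 by rewrite exprn_even_gt0.
have rs2_ge0 := mulr_ge0 r_ge0 (sqr_ge0 s).
have rc2_ge0 := mulr_ge0 r_ge0 (sqr_ge0 c).
have al_gt0 : 0 < al by rewrite /al; lra.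
pose aa := 2 * c ^+ 2 + r * s ^+ 2; pose bb := s ^+ 2 + r * c ^+ 2.
have aa_ge0 : 0 <= aa by rewrite /aa; lra.
have bb_ge0 : 0 <= bb by have := sqr_ge0 s; rewrite /bb; lra.
pose sos := (al * r * c ^+ 2)%:C * Q [:: (1, ix o0 o1 o1); (-1, ix o1 o0 o1)]
  + (al * r)%:C * Q [:: (r * s, ix o0 o0 o0); (- c, ix o0 o1 o1); (- c, ix o1 o0 o1)]
  + (al ^+ 2)%:C * Q [:: (1, ix o1 o0 o0); (-1, ix o0 o1 o0)]
  + Q [:: (al, ix o1 o0 o0); (al, ix o0 o1 o0); (- (2 * c * s), ix o1 o1 o1)]
  + (2 * (al * ga - 2 * c ^+ 2 * s ^+ 2))%:C * Q [:: (1, ix o1 o1 o1)]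
  + (2 * al * bb)%:C * Q [:: (1, ix o0 o0 o1)]
  + (2 * al * aa)%:C * Q [:: (1, ix o1 o1 o0)].
have sos_ge0 : 0 <= sos.
  by rewrite /sos; repeat (apply: cond || apply: addr_ge0 || apply: Q_ge0
    || rewrite ler0c || apply: sqr_ge0 || apply: mulr_ge0 || apply: ler0n
    || apply: (ltW al_gt0) || done).
(* [ring] does not know that r ^+ 2 = 2: the certificate holds up to a multiple
   of r ^+ 2 - 2. *)
have cert : (2 * al)%:C * (aa%:C * T o0 + bb%:C * T o1 - (overlap1 th L + overlap2 th L))
    - sos = (r ^+ 2 - 2)%:C *
    (- Om (ix o0 o0 o0) (ix o0 o0 o0) * (r%:C ^+ 2 * s%:C ^+ 4 + c%:C ^+ 2 * r%:C * s%:C ^+ 2)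
     + (Om (ix o0 o0 o0) (ix o0 o1 o1) + Om (ix o0 o0 o0) (ix o1 o0 o1)
        + Om (ix o0 o1 o1) (ix o0 o0 o0) + Om (ix o1 o0 o1) (ix o0 o0 o0))
       * (c%:C * r%:C * s%:C ^+ 3 + c%:C ^+ 3 * s%:C)).
  rewrite overlapsE /sos !mxform_basis_comb !big_cons !big_nil /= /al /ga /aa /bb.
  by ring.
move: cert; rewrite sqr_sqrt2 subrr rmorph0 mul0r => /eqP; rewrite subr_eq0 => /eqP cert.
rewrite sqrt2_sqr_identity -/r -/aa -/bb.
rewrite (_ : (_ + _)%:C = aa%:C * c%:C ^+ 2 + bb%:C * s%:C ^+ 2); last by ring.
move: sos_ge0; rewrite -cert pmulr_rge0 ?ltcR ?mulr_gt0 // subr_ge0.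
by rewrite blk_trace0 blk_trace1.
Qed.

End BroadcastBound.

Section ExplicitChannels.
Variable R : realType.
Local Notation C := R[i].

(* [kf j a1 a2 b] is the real matrix entry <a1 a2| K_j |b> of the j-th Kraus
   operator. *)
Definition kraus_op r (kf : 'I_r -> 'I_2 -> 'I_2 -> 'I_2 -> R) (j : 'I_r) :
  'M[C]_(2 * 2, 2) := \matrix_(i, b) (kf j (idx_pair i).1 (idx_pair i).2 b)%:C.

Lemma kraus_op_channel r (kf : 'I_r -> 'I_2 -> 'I_2 -> 'I_2 -> R) :
  (forall b d, \sum_j \sum_(a1 < 2) \sum_(a2 < 2) kf j a1 a2 b * kf j a1 a2 d = (b == d)%:R) ->
  channel (kraus (kraus_op kf)).
Proof.
move=> kf_tp; apply: kraus_channel; apply/matrixP => b d; rewrite summxE [RHS]mxE.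
rewrite -(rmorph_nat (real_complex R)) -kf_tp !rmorph_sum; apply: eq_bigr => j _.
rewrite mxE sum_mxvec_index rmorph_sum; apply: eq_bigr => a1 _.
rewrite rmorph_sum; apply: eq_bigr => a2 _.
by rewrite adjmxE !mxE conjc_real idx_pair_mxvec_index /= rmorphM.
Qed.

Lemma ext_kraus_op_psi th r (kf : 'I_r -> 'I_2 -> 'I_2 -> 'I_2 -> R) a1 a2 b a1' a2' d :
  ext (kraus (kraus_op kf)) (psi_state th) (ix a1 a2 b) (ix a1' a2' d) =
  (\sum_j kf j a1 a2 b * amp th b * (kf j a1' a2' d * amp th d))%:C.
Proof.
rewrite /ext mxE !idx_pair_mxvec_index /= /kraus summxE rmorph_sum.
apply: eq_bigr => j _; rewrite !mxE !sum_ord2 !adjmxE /blk !mxE !sum_ord2 !mxE.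
rewrite !big_ord1 !adjmxE !psi_ketE !conjc_real !idx_pair_mxvec_index /=.
by case: (ord2_cases b) => ->; case: (ord2_cases d) => -> /=; ring.
Qed.

Definition kf_small (j : 'I_1) (a1 a2 b : 'I_2) : R :=
  if b == o0 then ((a1 == o0) && (a2 == o0))%:R else (a1 != a2)%:R / Num.sqrt 2.

Lemma kf_small_channel : channel (kraus (kraus_op kf_small)).
Proof.
apply: kraus_op_channel => b d.
have rV2 : (Num.sqrt 2)^-1 * (Num.sqrt 2)^-1 = 2^-1 :> R.
  by rewrite -invrM ?unitfE ?sqrt2_neq0 // -expr2 sqr_sqrt2.
rewrite big_ord1 !sum_ord2 /kf_small.
case: (ord2_cases b) => ->; case: (ord2_cases d) => -> /=; try ring.
by rewrite !mul1r !mul0r; lra.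
Qed.

Lemma overlaps_small th :
  overlap1 th (kraus (kraus_op kf_small)) = ((cos th ^+ 2 + sin th ^+ 2 / Num.sqrt 2) ^+ 2)%:C
  /\ overlap2 th (kraus (kraus_op kf_small)) = ((cos th ^+ 2 + sin th ^+ 2 / Num.sqrt 2) ^+ 2)%:C.
Proof.
rewrite /overlap1 /overlap2 mxform_psi_keep1 mxform_psi_keep2 !sum_ord2.
rewrite !mxform_basis_comb !big_cons !big_nil /= !ext_kraus_op_psi !big_ord1.
by rewrite /kf_small /amp /=; split; ring.
Qed.

Definition kf_large (p q p' q' : R) (j : 'I_2) (a1 a2 b : 'I_2) : R :=
  if j == o0 then
    (if b == o0 then ((a1 == o0) && (a2 == o0))%:R * p else (a1 != a2)%:R * q)
  else (if b == o0 then (a1 != a2)%:R * p' else ((a1 == o1) && (a2 == o1))%:R * q').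

Lemma kf_large_channel p q p' q' :
  p ^+ 2 + 2 * p' ^+ 2 = 1 -> 2 * q ^+ 2 + q' ^+ 2 = 1 ->
  channel (kraus (kraus_op (kf_large p q p' q'))).
Proof.
move=> norm0 norm1; apply: kraus_op_channel => b d.
rewrite !sum_ord2 /kf_large.
case: (ord2_cases b) => ->; case: (ord2_cases d) => -> /=; try ring.
  by transitivity (p ^+ 2 + 2 * p' ^+ 2); [ring | exact: norm0].
by transitivity (2 * q ^+ 2 + q' ^+ 2); [ring | exact: norm1].
Qed.

Lemma overlaps_large th p q p' q' :
  let v := (p * cos th ^+ 2 + q * sin th ^+ 2) ^+ 2 + (p' * cos th ^+ 2 + q' * sin th ^+ 2) ^+ 2 in
  overlap1 th (kraus (kraus_op (kf_large p q p' q'))) = v%:C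
  /\ overlap2 th (kraus (kraus_op (kf_large p q p' q'))) = v%:C.
Proof.
rewrite /overlap1 /overlap2 mxform_psi_keep1 mxform_psi_keep2 !sum_ord2.
rewrite !mxform_basis_comb !big_cons !big_nil /= !ext_kraus_op_psi !sum_ord2.
by rewrite /kf_large /amp /=; split; ring.
Qed.

End ExplicitChannels.

Section Optimum.
Variable R : realType.

Lemma fidelity_keep1 (th : R) (L : 'M[R[i]]_2 -> 'M[R[i]]_(2 * 2)) : channel L ->
  fidelity (psi_state th) (keep1 (ext L (psi_state th))) =
  Num.sqrt (complex.Re (overlap1 th L)).
Proof. by move=> chL; apply: (fidelity_pure (psi_ket_unit th)); apply: overlap1_ge0. Qed.

Lemma fidelity_keep2 (th : R) (L : 'M[R[i]]_2 -> 'M[R[i]]_(2 * 2)) : channel L ->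
  fidelity (psi_state th) (keep2 (ext L (psi_state th))) =
  Num.sqrt (complex.Re (overlap2 th L)).
Proof. by move=> chL; apply: (fidelity_pure (psi_ket_unit th)); apply: overlap2_ge0. Qed.

Lemma f2_psi_eq (th f : R) (L0 : 'M[R[i]]_2 -> 'M[R[i]]_(2 * 2)) : 0 <= f -> channel L0 ->
  overlap1 th L0 = (f ^+ 2)%:C -> overlap2 th L0 = (f ^+ 2)%:C ->
  (forall L, channel L -> overlap1 th L + overlap2 th L <= (2 * f ^+ 2)%:C) ->
  f2 (psi_state th) = f.
Proof.
move=> f_ge0 chL0 overlap1E overlap2E overlaps_le; apply: sup_eq_max.
  exists L0; split => //.
  rewrite fidelity_keep1 // fidelity_keep2 // overlap1E overlap2E /=.
  by rewrite sqrtr_sqr ger0_norm //; lra.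
move=> y [L [chL ->]]; rewrite fidelity_keep1 // fidelity_keep2 //.
have [overlap1_real Re1_ge0] := ge0_complexE (overlap1_ge0 th chL).
have [overlap2_real Re2_ge0] := ge0_complexE (overlap2_ge0 th chL).
apply: avg_sqrt_le => //.
by have := overlaps_le L chL; rewrite {1}overlap1_real {1}overlap2_real -rmorphD lecR.
Qed.

Lemma f2_psi_small (th : R) : cos th != 0 -> 2 * sin th ^+ 4 <= cos th ^+ 4 ->
  f2 (psi_state th) = cos th ^+ 2 + sin th ^+ 2 / Num.sqrt 2.
Proof.
move=> c_neq0 quartic_le; have [overlap1E overlap2E] := overlaps_small th.
apply: (@f2_psi_eq _ _ (kraus (kraus_op (@kf_small R)))) => //.
- by rewrite addr_ge0 ?divr_ge0 ?sqr_ge0 ?sqrtr_ge0.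
- exact: kf_small_channel.
move=> L chL; apply: overlaps_le_asym chL c_neq0 _.
by apply: sqrt2_cross_ge0; rewrite ?sqr_ge0 // -!exprM; exact: quartic_le.
Qed.

Lemma kf_large_weights (c s : R) : c != 0 -> s != 0 ->
  c ^+ 4 <= 2 * s ^+ 4 -> s ^+ 4 <= 2 * c ^+ 4 ->
  exists p q p' q' : R, [/\ p ^+ 2 + 2 * p' ^+ 2 = 1, 2 * q ^+ 2 + q' ^+ 2 = 1 &
    (p * c ^+ 2 + q * s ^+ 2) ^+ 2 + (p' * c ^+ 2 + q' * s ^+ 2) ^+ 2 =
    3 / 2 * (c ^+ 4 + s ^+ 4)].
Proof.
move=> c_neq0 s_neq0 c4_le s4_le; pose den := 6 * c ^+ 2 * s ^+ 2.
have [c2_gt0 s2_gt0] : 0 < c ^+ 2 /\ 0 < s ^+ 2 by rewrite !exprn_even_gt0.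
have den_gt0 : 0 < den := mulr_gt0 (mulr_gt0 (ltr0Sn R 5) c2_gt0) s2_gt0.
pose x := Num.sqrt ((2 * c ^+ 4 - s ^+ 4) / den).
pose y := Num.sqrt ((2 * s ^+ 4 - c ^+ 4) / den).
have x2 : x ^+ 2 = (2 * c ^+ 4 - s ^+ 4) / den.
  by apply: sqr_sqrtr; apply: divr_ge0; [rewrite subr_ge0 | exact: ltW].
have y2 : y ^+ 2 = (2 * s ^+ 4 - c ^+ 4) / den.
  by apply: sqr_sqrtr; apply: divr_ge0; [rewrite subr_ge0 | exact: ltW].
exists (2 * s * x / c), (c * x / s), (s * y / c), (2 * c * y / s); split.
- rewrite (_ : _ + _ = (4 * s ^+ 2 * x ^+ 2 + 2 * s ^+ 2 * y ^+ 2) / c ^+ 2).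
    by rewrite x2 y2 /den; field; rewrite ?c_neq0 ?s_neq0.
  by field; rewrite ?c_neq0 ?s_neq0.
- rewrite (_ : _ + _ = (2 * c ^+ 2 * x ^+ 2 + 4 * c ^+ 2 * y ^+ 2) / s ^+ 2).
    by rewrite x2 y2 /den; field; rewrite ?c_neq0 ?s_neq0.
  by field; rewrite ?c_neq0 ?s_neq0.
rewrite (_ : _ + _ = 9 * c ^+ 2 * s ^+ 2 * (x ^+ 2 + y ^+ 2)).
  by rewrite x2 y2 /den; field; rewrite ?c_neq0 ?s_neq0.
by field; rewrite ?c_neq0 ?s_neq0.
Qed.

Lemma f2_psi_large (th : R) : cos th != 0 -> sin th != 0 ->
  cos th ^+ 4 <= 2 * sin th ^+ 4 -> sin th ^+ 4 <= 2 * cos th ^+ 4 ->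
  f2 (psi_state th) = Num.sqrt (3 / 2 * (cos th ^+ 4 + sin th ^+ 4)).
Proof.
move=> c_neq0 s_neq0 c4_le s4_le.
have v_ge0 : 0 <= 3 / 2 * (cos th ^+ 4 + sin th ^+ 4).
  by rewrite mulr_ge0 ?addr_ge0 ?exprn_even_ge0.
have [p [q [p' [q' [norm0 norm1 value]]]]] := kf_large_weights c_neq0 s_neq0 c4_le s4_le.
have [overlap1E overlap2E] := overlaps_large th p q p' q'.
apply: (@f2_psi_eq _ _ (kraus (kraus_op (kf_large p q p' q')))).
- exact: sqrtr_ge0.
- exact: kf_large_channel.
- by rewrite overlap1E /= value sqr_sqrtr.
- by rewrite overlap2E /= value sqr_sqrtr.
move=> L chL; apply: le_trans (overlaps_le_sym th chL) _.
by rewrite lecR sqr_sqrtr //; lra.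
Qed.

End Optimum.

Theorem theorem4 (R : realType) (th : R) :
  0 < th -> th <= pi / 4 ->
  f2 (psi_state th) =
    (if th <= atan (powR 2 (- 4^-1))
     then cos th ^+ 2 + sin th ^+ 2 / Num.sqrt 2
     else Num.sqrt (3 / 2 * (cos th ^+ 4 + sin th ^+ 4))).
Proof.
move=> th_gt0 th_le; have pi_gt0 := pi_gt0 R.
have thI : - (pi / 2) < th < pi / 2 by apply/andP; split; lra.
have c_gt0 : 0 < cos th by apply: cos_gt0_pihalf.
have s_gt0 : 0 < sin th by apply: sin_gt0_pihalf; apply/andP; split; lra.
have s_le_c : sin th <= cos th.
  by move: th_le; rewrite -atan1 le_atan // ler_pdivrMr // mul1r.
have s4_le_c4 : sin th ^+ 4 <= cos th ^+ 4 by rewrite lerXn2r // nnegrE ltW.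
have c4_ge0 : 0 <= cos th ^+ 4 by rewrite exprn_ge0 ?ltW.
rewrite (le_atan_quartic_root thI (ltW s_gt0)); case: leP => [small|large].
  by apply: f2_psi_small; rewrite ?gt_eqF.
by apply: f2_psi_large; rewrite ?gt_eqF //; lra.
Qed.
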